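(* Consider the SemiFree Magnetic Tower of Hanoi with $N\ge1$ disks: posts $S$, $D$, $I$, where every disk lying on $S$ must have its Red face up, every disk lying on $D$ must have its Blue face up, and $I$ is initially empty and unconstrained; the $N$ disks start on $S$ (Red face up, decreasing size bottom to top) and must be transferred to $D$. This can be done in $S_{SF}(N)$ moves, where $$S_{SF}(N)=(3^{N-1}+N-1)+\frac{3^{N-1}-1}{8}-\frac{N-1}{2}\quad (N\text{ odd}),\qquad S_{SF}(N)=(3^{N-1}+N-1)+\frac{3^{N-1}-3}{8}-\frac{N-2}{2}\quad (N\text{ even}),$$ by a solution in which disk $k$ (disks numbered $1,\dots,N$ from largest to smallest) moves $$P_{SF}(k)=2\cdot3^{k-2}+\frac{3^{k-1}-9}{8}-\frac{3^{k-2}-3}{8}+1\ (k\text{ odd}),\qquad P_{SF}(k)=2\cdot3^{k-2}+\frac{3^{k-1}-3}{8}-\frac{3^{k-2}-9}{8}\ (k\text{ even})$$ times. Moreover $S_{SF}(N)\big/\tfrac{3^N-1}{2}\to\tfrac34$ as $N\to\infty$.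
   Context: Magnetic Tower of Hanoi rules: there are three posts and disks of distinct diameters, each disk having one Red face and one Blue face. A move consists of lifting the top disk of some post, turning it upside down, and placing it on top of another post. (Size rule) a disk may never be placed on a smaller disk; (Magnet rule) a disk may never be placed so that its downward-facing side has the same color as the upward-facing side of the disk it lands on. In the SemiFree setting the posts $S$ and $D$ are permanently and oppositely colored (as if they sit on top of larger disks showing Red and Blue respectively), so any disk on $S$ must show Red upward and any disk on $D$ must show Blue upward, while the third post $I$ starts empty and neutral and may hold disks in either orientation subject to the rules above. *)

From HB Require Import structures.
From mathcomp Require Import all_boot all_order all_algebra.
From mathcomp Require Import all_classical all_reals all_analysis.
Set Implicit Arguments. Unset Strict Implicit. Unset Printing Implicit Defensive.
Import Order.TTheory GRing.Theory Num.Theory.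

(* Disks are indexed by 'I_N; the ordinal i stands for disk number i+1 in the
   paper's numbering (1 = largest, N = smallest).  Hence disk i is SMALLER
   than disk j iff j < i (as ordinals). *)

Inductive color := Red | Blue.
Definition color_eqb (a b : color) : bool :=
  match a, b with Red, Red | Blue, Blue => true | _, _ => false end.
Lemma color_eqP : Equality.axiom color_eqb.
Proof. by case; case; constructor. Qed.
HB.instance Definition _ := hasDecEq.Build color color_eqP.

Definition flip (c : color) : color := if c is Red then Blue else Red.

Inductive post := postS | postD | postI.
Definition post_eqb (a b : post) : bool :=
  match a, b with postS, postS | postD, postD | postI, postI => true | _, _ => false end.
Lemma post_eqP : Equality.axiom post_eqb.
Proof. by case; case; constructor. Qed.
HB.instance Definition _ := hasDecEq.Build post post_eqP.

(* The permanent color shown by the base of a post (S: Red, D: Blue);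
   I is neutral. *)
Definition base_color (p : post) : option color :=
  match p with postS => Some Red | postD => Some Blue | postI => None end.

(* A configuration: for each disk, the post it lies on and the color of its
   upward-facing side.  The order of disks on a post is determined by size. *)
Definition config (N : nat) := 'I_N -> post * color.

Definition move (N : nat) := ('I_N * post)%type.

Definition is_top N (s : config N) (p : post) (e : 'I_N) : Prop :=
  (s e).1 = p /\ forall e' : 'I_N, (s e').1 = p -> (e' <= e)%N.

(* Legality of a move: d is the top disk of its post, the destination is a
   different post, every disk on the destination is larger than d (size rule),
   and after turning d upside down, its downward face (= its former upward
   color c) differs from the upward face of what it lands on: the top disk of
   the destination, or the colored base if the destination is empty
   (magnet rule). *)
Definition legal_move N (s : config N) (m : move N) : Prop :=
  let: (d, q) := m in
  let: (p, c) := s d in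
  [/\ is_top s p d,
      q <> p,
      (forall e : 'I_N, (s e).1 = q -> (e < d)%N),
      (forall e : 'I_N, is_top s q e -> (s e).2 <> c) &
      ((forall e : 'I_N, (s e).1 <> q) -> base_color q <> Some c)].

Definition apply_move N (s : config N) (m : move N) : config N :=
  fun e => if e == m.1 then (m.2, flip (s e).2) else s e.

Fixpoint valid_run N (s : config N) (ms : seq (move N)) (t : config N) : Prop :=
  match ms with
  | [::] => forall e, s e = t e
  | m :: ms' => legal_move s m /\ valid_run (apply_move s m) ms' t
  end.

Definition init_config N : config N := fun _ => (postS, Red).
Definition final_config N : config N := fun _ => (postD, Blue).
Arguments init_config : clear implicits.
Arguments final_config : clear implicits.

Local Open Scope ring_scope.

Definition S_SF (N : nat) : rat :=
  let t : rat := 3 ^+ N.-1 in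
  if odd N then (t + N%:R - 1) + (t - 1) / 8 - (N%:R - 1) / 2
  else (t + N%:R - 1) + (t - 3) / 8 - (N%:R - 2) / 2.

(* powers with integer exponent, so that the formula makes sense for k = 1 *)
Definition pow3 (z : int) : rat := (3 : rat) ^ z.

Definition P_SF (k : nat) : rat :=
  if odd k then 2 * pow3 (k%:Z - 2) + (pow3 (k%:Z - 1) - 9) / 8
                 - (pow3 (k%:Z - 2) - 3) / 8 + 1
  else 2 * pow3 (k%:Z - 2) + (pow3 (k%:Z - 1) - 3) / 8
                 - (pow3 (k%:Z - 2) - 9) / 8.

From HB Require Import structures.
From mathcomp Require Import all_boot all_order all_algebra.
From mathcomp Require Import all_classical all_reals all_analysis.
From mathcomp Require Import ring lra zify.
Import Order.TTheory GRing.Theory Num.Theory.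
Import numFieldNormedType.Exports.

Set Implicit Arguments.
Unset Strict Implicit.
Unset Printing Implicit Defensive.

(* Moving a tower between two (post, colour)
   positions, with a prescribed colour visible on top of I below the tower,
   reduces to moves of the largest disk and moves of the smaller tower of the
   same kind; eleven such tasks are closed under this reduction.

   In the main task the (i+1)-th largest disk moves a(i) times, where
   a(i+2) = a(i) + 6 3^i because the subtasks reached after two levels move
   each disk 2 3^i or 3^i times; hence 4 a(i) = 3^(i+1) + (1 or 3), which is
   P_SF(i+1), and S_SF(N) is their sum.  As S_SF(N) = (3/4) (3^N - 1)/2 + O(N),
   the ratio tends to 3/4. *)

(* A task moves a tower from [task_src] to [task_dst] (post and upward colour
   of the tower) while the top of I below the tower shows [task_env]; the
   suffix of its name is that colour, [free] meaning that I is empty. *)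
Inductive task := SD_free | SI_free | ID_free | ID_blue | DI_blue
  | IS_red | SI_red | DI_red | ID_red | DS_red | SD_red.

Definition task_env (T : task) : option color :=
  match T with
  | SD_free | SI_free | ID_free => None
  | ID_blue | DI_blue => Some Blue
  | _ => Some Red
  end.

Definition task_src (T : task) : post * color :=
  match T with
  | SD_free | SI_free | SI_red | SD_red => (postS, Red)
  | ID_free | ID_blue => (postI, Blue)
  | IS_red | ID_red => (postI, Red)
  | DI_blue | DI_red | DS_red => (postD, Blue)
  end.

Definition task_dst (T : task) : post * color :=
  match T with
  | SD_free | ID_free | ID_blue | ID_red | SD_red => (postD, Blue)
  | SI_free | DI_blue => (postI, Blue)
  | IS_red | DS_red => (postS, Red)
  | SI_red | DI_red => (postI, Red)
  end.

Inductive step := SubTower of task | BigDisk of post.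

Definition plan (T : task) : seq step :=
  match T with
  | SD_free => [:: SubTower SI_free; BigDisk postD; SubTower ID_free]
  | SI_free => [:: SubTower SD_free; BigDisk postI; SubTower DI_blue]
  | ID_free => [:: SubTower ID_blue; BigDisk postS; SubTower DI_red;
                   BigDisk postD; SubTower ID_red]
  | ID_blue => [:: SubTower ID_blue; BigDisk postS; SubTower DI_blue;
                   BigDisk postD; SubTower ID_blue]
  | DI_blue => [:: SubTower DI_blue; BigDisk postS; SubTower ID_blue;
                   BigDisk postI; SubTower DI_blue]
  | IS_red => [:: SubTower IS_red; BigDisk postD; SubTower SI_red;
                  BigDisk postS; SubTower IS_red]
  | SI_red => [:: SubTower SI_red; BigDisk postD; SubTower IS_red;
                  BigDisk postI; SubTower SI_red]
  | DI_red => [:: SubTower DS_red; BigDisk postI; SubTower SI_red]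
  | ID_red => [:: SubTower IS_red; BigDisk postD; SubTower SD_red]
  | DS_red => [:: SubTower DI_red; BigDisk postS; SubTower IS_red]
  | SD_red => [:: SubTower SI_red; BigDisk postD; SubTower ID_red]
  end.

Definition env_color (e : option color) (Q : post) : option color :=
  if Q is postI then e else base_color Q.

(* A visible colour [a] restricts a landing disk at most as much as [b]:
   [None] (an empty neutral post) restricts nothing. *)
Definition refines (a b : option color) : bool := (a == b) || (a == None).

Lemma refines_trans a b c : refines a b -> refines b c -> refines a c.
Proof. by rewrite /refines => /orP [/eqP ->|/eqP ->] //; rewrite orbT. Qed.

Lemma refines_neq a b C : refines a b -> b != Some C -> a != Some C.
Proof. by rewrite /refines => /orP [/eqP ->|/eqP ->]. Qed.

(* Placing the largest disk at [L] over the environment [e] leaves the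
   smaller tower an environment refining [e']. *)
Definition sub_env_ok (e e' : option color) (L : post * color) : bool :=
  all (fun Q => refines (if L.1 == Q then Some L.2 else env_color e Q)
                        (env_color e' Q))
      [:: postS; postD; postI].

Lemma sub_env_okP e e' L : sub_env_ok e e' L ->
  forall Q, refines (if L.1 == Q then Some L.2 else env_color e Q)
                    (env_color e' Q).
Proof. by rewrite /sub_env_ok /= => /and4P [hS hD hI _] []. Qed.

(* Tracks the positions [L] of the largest disk and [sub] of the smaller
   tower along a plan run in environment [e]. *)
Fixpoint exec_plan (e : option color) (L sub : post * color) (ps : seq step)
  : option ((post * color) * (post * color)) :=
  match ps with
  | [::] => Some (L, sub)
  | SubTower T :: ps' =>
      if (sub == task_src T) && sub_env_ok e (task_env T) L
      then exec_plan e L (task_dst T) ps' else None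
  | BigDisk Q :: ps' =>
      if [&& Q != L.1, Q != sub.1, L.1 != sub.1 & env_color e Q != Some L.2]
      then exec_plan e (Q, flip L.2) sub ps' else None
  end.

Definition plan_ok (T : task) : bool :=
  exec_plan (task_env T) (task_src T) (task_src T) (plan T)
  == Some (task_dst T, task_dst T).

Lemma all_plans_ok T : plan_ok T.
Proof. by case: T; vm_compute. Qed.

Lemma valid_run_cat N (s u t : config N) ms ms' :
  valid_run s ms u -> valid_run u ms' t -> valid_run s (ms ++ ms') t.
Proof.
elim: ms s => [|m ms IH] s /=.
  by move=> hsu; have -> : s = u by apply: boolp.funext.
by move=> [hm hms] hms'; split => //; apply: IH hms hms'.
Qed.

(* Task [T] on the tower of the [d] smallest of the [n.+1] disks, whose
   largest disk has index [n.+1 - d]. *)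
Fixpoint tower_moves (n d : nat) (T : task) : seq (move n.+1) :=
  match d with
  | 0 => [::]
  | d'.+1 => flatten [seq match st with
                          | SubTower T' => tower_moves n d' T'
                          | BigDisk Q => [:: (inord (n - d'), Q)]
                          end | st <- plan T]
  end.

Definition step_moves (n d : nat) (st : step) : seq (move n.+1) :=
  match st with
  | SubTower T => tower_moves n d T
  | BigDisk Q => [:: (inord (n - d), Q)]
  end.

Lemma tower_movesS n d T :
  tower_moves n d.+1 T = flatten [seq step_moves n d st | st <- plan T].
Proof. by []. Qed.

(* The colour visible on top of [Q] when only the disks [< k] are present. *)
Fixpoint top_color n (s : config n.+1) (k : nat) (Q : post) : option color :=
  if k is k'.+1 then
    if (s (inord k')).1 == Q then Some (s (inord k')).2 else top_color s k' Q
  else base_color Q.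

Lemma top_color_ext n (s s' : config n.+1) k Q : k <= n.+1 ->
  (forall j : 'I_n.+1, j < k -> s j = s' j) ->
  top_color s k Q = top_color s' k Q.
Proof.
elim: k => [//|k IH] hk hss' /=.
rewrite hss' ?inordK // IH //; first exact: ltnW.
by move=> j hj; apply: hss'; exact: ltnW.
Qed.

Lemma top_colorP n (s : config n.+1) k Q : k <= n.+1 ->
  ((forall j : 'I_n.+1, j < k -> (s j).1 <> Q) /\
     top_color s k Q = base_color Q) \/
  (exists j : 'I_n.+1, [/\ j < k, (s j).1 = Q, top_color s k Q = Some (s j).2
     & forall j' : 'I_n.+1, j' < k -> (s j').1 = Q -> j' <= j]).
Proof.
elim: k => [_|k IH hk]; first by left.
have kE : ((inord k : 'I_n.+1) : nat) = k by rewrite inordK.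
have ltSE (j : 'I_n.+1) : j < k.+1 -> j = inord k \/ j < k.
  rewrite ltnS leq_eqVlt => /orP [/eqP hj|]; last by right.
  by left; apply: ord_inj; rewrite kE.
rewrite /=; case: eqP => hQ.
  by right; exists (inord k); rewrite kE; split => // j' /ltSE [->|/ltnW].
case: (IH (ltnW hk)) => [[hnone htop]|[j [hj hjQ htop hmax]]].
  by left; split => // j /ltSE [->|]; [|exact: hnone].
right; exists j; split => //; first exact: ltnW.
by move=> j' /ltSE [->|]; [|exact: hmax].
Qed.

(* The size rule holds automatically: the disks on [Q] are larger than [k]
   because the smaller ones all sit on [p2]. *)
Lemma legal_largest_move n (s : config n.+1) (k : nat) (P Q p2 : post) C :
  k < n.+1 -> s (inord k) = (P, C) ->
  (forall j : 'I_n.+1, k < j -> (s j).1 = p2) ->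
  P != p2 -> Q != P -> Q != p2 -> top_color s k Q != Some C ->
  legal_move s (inord k, Q).
Proof.
move=> hk hsk hsmall /eqP hPp2 /eqP hQP /eqP hQp2 /eqP htop.
have kE : ((inord k : 'I_n.+1) : nat) = k by rewrite inordK.
have onQ (e : 'I_n.+1) : (s e).1 = Q -> e < k.
  move=> he; case: (ltngtP e k) => // h.
    by move: (hsmall _ h); rewrite he => /hQp2.
  have ek : e = inord k by apply: ord_inj; rewrite kE.
  by move: he; rewrite ek hsk => /esym /hQP.
rewrite /legal_move hsk; split => //.
- split; first by rewrite hsk.
  move=> e he; rewrite kE; case: (ltnP k e) => // hlt.
  by move: (hsmall _ hlt); rewrite he => /hPp2.
- by move=> e he; rewrite kE; apply: onQ.
- move=> e [he hmax].
  case: (top_colorP s Q (ltnW hk)) => [[hnone _]|[j [_ hjQ htopj hjmax]]].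
    by case: (hnone e (onQ e he)).
  have ej : e = j.
    apply: ord_inj; apply/eqP; rewrite eqn_leq (hmax j hjQ) andbT.
    exact: hjmax (onQ e he) he.
  by rewrite ej => hC; apply: htop; rewrite htopj hC.
- move=> hempty.
  case: (top_colorP s Q (ltnW hk)) => [[_ <-]|[j [_ hjQ _ _]]] //.
  by case: (hempty j).
Qed.

Definition tower_cfg n (s : config n.+1) (k : nat) (L sub : post * color)
  : config n.+1 :=
  fun j => if j < k then s j else if (j : nat) == k then L else sub.

Lemma tower_cfg0 n (s : config n.+1) L : tower_cfg s 0 L L = fun=> L.
Proof. by apply: boolp.funext => j; rewrite /tower_cfg; case: ifP. Qed.

Lemma tower_cfgS n (s : config n.+1) k L sub X :
  tower_cfg (tower_cfg s k L sub) k.+1 X X = tower_cfg s k L X.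
Proof.
apply: boolp.funext => j; rewrite /tower_cfg ltnS leq_eqVlt.
by case: (ltngtP j k) => //= _; case: ifP.
Qed.

Lemma top_color_tower_cfg n (s : config n.+1) k L sub Q : k < n.+1 ->
  top_color (tower_cfg s k L sub) k Q = top_color s k Q.
Proof.
move=> hk; apply: top_color_ext (ltnW hk) _ => j /= hj.
by rewrite /tower_cfg hj.
Qed.

Lemma top_color_tower_cfgS n (s : config n.+1) k L sub Q : k < n.+1 ->
  top_color (tower_cfg s k L sub) k.+1 Q =
  if L.1 == Q then Some L.2 else top_color s k Q.
Proof.
move=> hk; rewrite /= top_color_tower_cfg //.
by rewrite {1 2}/tower_cfg inordK // ltnn eqxx.
Qed.

Lemma apply_move_tower_cfg n (s : config n.+1) k L sub Q : k < n.+1 ->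
  apply_move (tower_cfg s k L sub) (inord k, Q) =
  tower_cfg s k (Q, flip L.2) sub.
Proof.
move=> hk; apply: boolp.funext => j; rewrite /apply_move /tower_cfg /=.
have -> : (j == inord k) = ((j : nat) == k) by rewrite -val_eqE /= inordK.
by case: (ltngtP j k) => // ->; rewrite ltnn eqxx.
Qed.

Definition env_ok n (s : config n.+1) (k : nat) (e : option color) : Prop :=
  forall Q, refines (top_color s k Q) (env_color e Q).

Definition performs (n d : nat) (T : task) : Prop :=
  forall s : config n.+1, env_ok s (n.+1 - d) (task_env T) ->
  valid_run (tower_cfg s (n.+1 - d) (task_src T) (task_src T))
            (tower_moves n d T)
            (tower_cfg s (n.+1 - d) (task_dst T) (task_dst T)).

Lemma performs0 n T : performs n 0 T.
Proof. by move=> s _ j; rewrite /tower_cfg subn0 ltn_ord. Qed.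

Section OneLevel.

Variables (n d : nat).
Hypothesis d_le_n : d <= n.
Hypothesis IH : forall T, performs n d T.

Local Notation k := (n - d).

Let k_lt : k < n.+1. Proof. lia. Qed.
Let subSdE : n.+1 - d = k.+1. Proof. lia. Qed.

Lemma exec_plan_sound e s ps L sub L' sub' : env_ok s k e ->
  exec_plan e L sub ps = Some (L', sub') ->
  valid_run (tower_cfg s k L sub) (flatten [seq step_moves n d st | st <- ps])
            (tower_cfg s k L' sub').
Proof.
move=> henv; elim: ps L sub => [|[T|Q] ps IHps] L sub /=.
- by case=> <- <-.
- case: ifP => // /andP [/eqP hsub hsubenv] hrun.
  apply: valid_run_cat (IHps _ _ hrun).
  have := @IH T (tower_cfg s k L sub).
  rewrite subSdE !tower_cfgS hsub; apply=> Q.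
  rewrite top_color_tower_cfgS //.
  case: eqP (sub_env_okP hsubenv Q) => _ hQ; first exact: hQ.
  exact: refines_trans (henv Q) hQ.
- case: ifP => // /and4P [hQL hQsub hLsub henvQ] hrun.
  split; last by rewrite apply_move_tower_cfg //; exact: IHps.
  case: L {hrun} hQL hLsub henvQ => P C /= hQL hLsub henvQ.
  apply: (@legal_largest_move n _ k P Q sub.1 C) => //.
  + by rewrite /tower_cfg inordK // ltnn eqxx.
  + by move=> j hj; rewrite /tower_cfg ltnNge (ltnW hj) /= gtn_eqF.
  + by rewrite top_color_tower_cfg //; exact: refines_neq (henv Q) henvQ.
Qed.

Lemma performsS T : performs n d.+1 T.
Proof.
move=> s; rewrite subSS tower_movesS => henv.
by apply: exec_plan_sound henv _; apply/eqP; exact: all_plans_ok.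
Qed.

End OneLevel.

Lemma tower_moves_perform n d T : d <= n.+1 -> performs n d T.
Proof.
elim: d T => [|d IH] T hd; first exact: performs0.
by apply: performsS => // T'; apply: IH; exact: ltnW.
Qed.

Definition is_big (st : step) : bool := if st is BigDisk _ then true else false.

(* [disk_moves i T]: moves made by the disk [i] levels below the largest
   disk of the tower during task [T]. *)
Fixpoint disk_moves (i : nat) (T : task) : nat :=
  if i is i'.+1 then
    sumn [seq if st is SubTower T' then disk_moves i' T' else 0 | st <- plan T]
  else count is_big (plan T).

Lemma count_tower_moves n d T (j : 'I_n.+1) : d <= n.+1 ->
  count (fun m : move n.+1 => m.1 == j) (tower_moves n d T) =
  if n.+1 - d <= j then disk_moves (j - (n.+1 - d)) T else 0.
Proof.
elim: d T => [|d IHd] T hd; first by rewrite subn0 leqNgt ltn_ord.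
rewrite tower_movesS subSS.
have hdE : n.+1 - d = (n - d).+1 by lia.
have bigE : ((inord (n - d) : 'I_n.+1) == j) = ((j : nat) == n - d).
  by rewrite eq_sym -val_eqE /= inordK //; lia.
have -> : forall ps, count (fun m : move n.+1 => m.1 == j)
    (flatten [seq step_moves n d st | st <- ps]) =
  if n - d <= j then
    if (j : nat) == n - d then count is_big ps
    else sumn [seq if st is SubTower T' then disk_moves (j - (n - d).+1) T'
                   else 0 | st <- ps]
  else 0.
  elim=> [|[T'|Q] ps IH] /=.
  - by case: ifP => //; case: ifP.
  - rewrite count_cat IH IHd ?(ltnW hd) // hdE.
    by case: (ltngtP j (n - d)).
  - by rewrite IH bigE; case: (ltngtP j (n - d)).
case: (ltngtP j (n - d)) => h //=.
- by have -> : j - (n - d) = (j - (n - d).+1).+1 by lia.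
- by rewrite h subnn.
Qed.

Lemma size_sum_count (T : finType) (U : Type) (f : U -> T) (s : seq U) :
  size s = \sum_(j : T) count (fun x => f x == j) s.
Proof.
elim: s => [|x s IH]; first by rewrite big1.
rewrite /= IH big_split /= -add1n; congr (_ + _).
by rewrite (bigD1 (f x)) //= eqxx big1 // => j hj; rewrite eq_sym (negbTE hj).
Qed.

Lemma disk_moves_double i :
  [/\ disk_moves i ID_blue = 2 * 3 ^ i, disk_moves i DI_blue = 2 * 3 ^ i,
      disk_moves i IS_red = 2 * 3 ^ i & disk_moves i SI_red = 2 * 3 ^ i].
Proof.
elim: i => [|i [h1 h2 h3 h4]] //=.
by rewrite h1 h2 h3 h4 expnS; split; lia.
Qed.

Lemma disk_moves_single i :
  [/\ disk_moves i DI_red = 3 ^ i, disk_moves i ID_red = 3 ^ i,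
      disk_moves i DS_red = 3 ^ i & disk_moves i SD_red = 3 ^ i].
Proof.
elim: i => [|i [h1 h2 h3 h4]] //=.
case: (disk_moves_double i) => _ _ d3 d4.
by rewrite h1 h2 h3 h4 d3 d4 expnS; split; lia.
Qed.

Lemma disk_moves_SD_freeSS i :
  disk_moves i.+2 SD_free = disk_moves i SD_free + 6 * 3 ^ i.
Proof.
rewrite /=.
case: (disk_moves_double i) => d1 d2 _ _.
case: (disk_moves_single i) => s1 s2 _ _.
by rewrite d1 d2 s1 s2; lia.
Qed.

Definition odd_offset (i : nat) : nat := if odd i then 3 else 1.

Lemma disk_moves_SD_free i :
  4 * disk_moves i SD_free = 3 ^ i.+1 + odd_offset i.
Proof.
suff : 4 * disk_moves i SD_free = 3 ^ i.+1 + odd_offset i /\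
        4 * disk_moves i.+1 SD_free = 3 ^ i.+2 + odd_offset i.+1 by case.
elim: i => [|i [h0 h1]] //; split => //.
rewrite disk_moves_SD_freeSS mulnDr h0 !expnS /odd_offset /= negbK; lia.
Qed.

Local Open Scope classical_set_scope.
Local Open Scope ring_scope.

Lemma P_SF_closed k : P_SF k.+1 = (3 ^+ k.+1 + (odd_offset k)%:R) / 4.
Proof.
have pow3E (m j : nat) : pow3 (m%:Z - j%:Z) = 3 ^+ m / 3 ^+ j.
  by rewrite /pow3 expfzDr // -exprnP -exprnN.
rewrite /P_SF /odd_offset (pow3E k.+1 2) (pow3E k.+1 1) /=.
by case: (odd k); field.
Qed.

Lemma S_SF_recr n : S_SF n.+2 = S_SF n.+1 + P_SF n.+2.
Proof.
rewrite P_SF_closed /S_SF /odd_offset /= !exprS.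
by case: (odd n) => /=; rewrite -!natr1; field.
Qed.

Lemma S_SF_sum n : S_SF n.+1 = \sum_(j < n.+1) P_SF j.+1.
Proof.
elim: n => [|n IH].
  by rewrite big_ord1 P_SF_closed /S_SF /odd_offset /=; field.
by rewrite big_ord_recr /= -IH S_SF_recr.
Qed.

Lemma disk_moves_SD_freeE i : (disk_moves i SD_free)%:R = P_SF i.+1.
Proof.
have := congr1 (fun x : nat => x%:R : rat) (disk_moves_SD_free i).
by rewrite /= natrM natrD natrX P_SF_closed => <-; field.
Qed.

Lemma semifree_solution N : (1 <= N)%N ->
  exists ms : seq (move N),
    [/\ valid_run (init_config N) ms (final_config N),
        (size ms)%:R = S_SF N &
        forall k : 'I_N,
          (count (fun m : move N => m.1 == k) ms)%:R = P_SF k.+1].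
Proof.
case: N => [//|n] _.
have countE (k : 'I_n.+1) :
    count (fun m : move n.+1 => m.1 == k) (tower_moves n n.+1 SD_free) =
    disk_moves k SD_free.
  by rewrite count_tower_moves // subnn subn0.
exists (tower_moves n n.+1 SD_free); split.
- have := @tower_moves_perform n n.+1 SD_free (leqnn _) (init_config n.+1).
  by rewrite subnn !tower_cfg0; apply=> -[].
- rewrite (size_sum_count fst) (eq_bigr _ (fun k _ => countE k)).
  rewrite natr_sum S_SF_sum.
  by apply: eq_bigr => k _; exact: disk_moves_SD_freeE.
- by move=> k; rewrite countE disk_moves_SD_freeE.
Qed.

Lemma expn3_lower m : (m.+1 * m.+2 + 1 <= 3 ^ m.+1)%N.
Proof. by elim: m => [//|m IH]; rewrite expnS; nia. Qed.

Lemma S_SF_ratio_sub m :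
  S_SF m.+1 / ((3 ^+ m.+1 - 1) / 2) - 3 / 4 =
  (m%:R + (if odd m then 1 else 2^-1)) / (3 ^+ m.+1 - 1).
Proof.
have := expn3_lower m; rewrite -(ler_nat rat) natrX exprS.
rewrite /S_SF /=; set u : rat := 3 ^+ m.
rewrite natrD natrM -!natr1 => hu.
have hm : 0 <= (m%:R : rat) by [].
have hden : 3 * u - 1 != 0 by apply: lt0r_neq0; nra.
by case: (odd m) => /=; field.
Qed.

Lemma S_SF_ratio_bound m :
  0 <= S_SF m.+1 / ((3 ^+ m.+1 - 1) / 2) - 3 / 4 <= m.+2%:R^-1.
Proof.
have := expn3_lower m; rewrite -(ler_nat rat) natrX natrD natrM => hu.
rewrite S_SF_ratio_sub.
have m2E : m.+2%:R = m%:R + 2 :> rat by rewrite -!natr1 -addrA.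
have m1E : m.+1%:R = m%:R + 1 :> rat by rewrite -natr1.
rewrite m2E; rewrite m1E m2E in hu.
have hm : 0 <= (m%:R : rat) by [].
have hden : 0 < 3 ^+ m.+1 - 1 :> rat by nra.
apply/andP; split.
  by apply: divr_ge0; [case: (odd m) => /=; lra | lra].
rewrite ler_pdivrMr // ler_pdivlMl; last by lra.
by case: (odd m) => /=; nra.
Qed.

Lemma S_SF_ratio_cvg (R : realType) :
  (fun N : nat => (ratr (S_SF N) : R) / ratr (((3 : rat) ^+ N - 1) / 2))
    @ \oo --> (3 / 4 : R).
Proof.
apply/cvgrPdist_le => e he; near=> N.
have hN : (1 <= N)%N by near: N; exact: nbhs_infty_ge.
have hNe : N.+1%:R^-1 < e.
  by near: N; exact: (near_infty_natSinv_lt (PosNum he)).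
move: hNe; rewrite -(prednK hN); move: N.-1 => m hme.
have /andP [hlo hhi] := S_SF_ratio_bound m.
have e34 : (3 / 4 : R) = ratr (3 / 4) by rewrite fmorph_div !rmorph_nat.
have em : (m.+2%:R^-1 : R) = ratr (m.+2%:R^-1) by rewrite fmorphV rmorph_nat.
rewrite -fmorph_div ler_norml; apply/andP; split.
- rewrite lerNl opprB e34 -rmorphB; apply: le_trans (ltW hme).
  by rewrite em ler_rat.
- rewrite e34 -rmorphB; apply: le_trans (ltW he).
  by rewrite -(rmorph0 ratr) ler_rat; lra.
Unshelve. all: by end_near.
Qed.

Theorem mainTheorem3 (R : realType) :
  (forall N : nat, (1 <= N)%N ->
     exists ms : seq (move N),
       [/\ valid_run (init_config N) ms (final_config N),
           (size ms)%:R = S_SF N &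
           forall k : 'I_N,
             (count (fun m : move N => m.1 == k) ms)%:R = P_SF k.+1]) /\
  ((fun N : nat => (ratr (S_SF N) : R) / ratr (((3 : rat) ^+ N - 1) / 2))
     @ \oo --> (3 / 4 : R)).
Proof. by split; [exact: semifree_solution | exact: S_SF_ratio_cvg]. Qed.
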